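(* Let $(G,\cdot)$ be a loop with identity $e$ and $(H,\cdot)$ a non-trivial subloop such that $(xs\cdot z)s=x(sz\cdot s)$ for all $x,z\in G$, $s\in H$. Let $(U,V,W)\in\mathrm{S_{2nd}LAUT}(G_H)\cap\mathrm{S_{2nd}RAUT}(G_H)$, $s_1=eU$ and $s_2=eV$. Then $A=UR_{s_1}^{-1}\in\mathrm{S_{2nd}LPAUT}(G_H)\cap\mathrm{S_{2nd}RPAUT}(G_H)$ with second Smarandache left companion and second Smarandache right companion $c=s_1s_2\cdot s_1$, and $$(U,V,W)=(A,AR_c,AR_c)\,(R_{s_1}^{-1},L_{s_1}R_{s_1},R_{s_1})^{-1}.$$
   Context: Juxtaposition binds more tightly than $\cdot$. Maps are written on the right and composed left to right; $xR_s=x\cdot s$, $xL_s=s\cdot x$; triples are multiplied componentwise. $SYM(G)$ is the group of bijections of $G$; $SSYM(G_H)=\{A\in SYM(G):HA=H\}$. $\mathrm{S_{2nd}RAUT}(G_H)$: triples $(U,V,W)$ with $U,W\in SYM(G)$, $V\in SSYM(G_H)$, $xU\cdot sV=(x\cdot s)W$ for all $x\in G$, $s\in H$. $\mathrm{S_{2nd}LAUT}(G_H)$: triples $(U,V,W)$ with $V,W\in SYM(G)$, $U\in SSYM(G_H)$, $sU\cdot yV=(s\cdot y)W$ for all $y\in G$, $s\in H$. $\mathrm{S_{2nd}RPAUT}(G_H)$ (resp. $\mathrm{S_{2nd}LPAUT}(G_H)$) is the set of $A\in SSYM(G_H)$ for which there is $c\in H$ with $(A,AR_c,AR_c)\in\mathrm{S_{2nd}RAUT}(G_H)$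 (resp. $\in\mathrm{S_{2nd}LAUT}(G_H)$); $c$ is called a second Smarandache right (resp. left) companion of $A$. *)

From mathcomp Require Import ssreflect ssrfun.
From Stdlib Require Import ClassicalEpsilon.

Set Implicit Arguments.
Unset Strict Implicit.

Record loop (G : Type) := Loop {
  mul : G -> G -> G;
  ldiv : G -> G -> G;
  rdiv : G -> G -> G;
  e : G;
  mul1g : forall x, mul e x = x;
  mulg1 : forall x, mul x e = x;
  mulKl : forall x y, ldiv x (mul x y) = y;
  mulVl : forall x y, mul x (ldiv x y) = y;
  mulKr : forall x y, rdiv (mul y x) x = y;
  mulVr : forall x y, mul (rdiv y x) x = y
}.

Section Defs.
Variables (G : Type) (L : loop G).
Local Notation "x * y" := (mul L x y).

Definition subloop (H : G -> Prop) : Prop :=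
  H (e L) /\
  (forall x y, H x -> H y -> H (x * y)) /\
  (forall x y, H x -> H y -> H (ldiv L x y)) /\
  (forall x y, H x -> H y -> H (rdiv L x y)).

Definition nontrivial (H : G -> Prop) : Prop := exists s, H s /\ s <> e L.

(* Maps are written on the right and composed left to right:
   x (f ;; g) = (x f) g. *)
Definition compr (f g : G -> G) : G -> G := fun x => g (f x).

Definition Rm (s : G) : G -> G := fun x => x * s.
Definition Lm (s : G) : G -> G := fun x => s * x.

(* Inverse of a map (meaningful for bijections). *)
Definition finv (f : G -> G) : G -> G :=
  fun y => epsilon (inhabits (e L)) (fun x => f x = y).

Definition SYM (A : G -> G) : Prop := bijective A.
Definition SSYM (H : G -> Prop) (A : G -> G) : Prop :=
  bijective A /\ (forall y, H y <-> exists x, H x /\ A x = y).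

Definition triple := ((G -> G) * (G -> G) * (G -> G))%type.

Definition tmul (a b : triple) : triple :=
  let: (U1, V1, W1) := a in let: (U2, V2, W2) := b in
  (compr U1 U2, compr V1 V2, compr W1 W2).
Definition tinv (a : triple) : triple :=
  let: (U, V, W) := a in (finv U, finv V, finv W).

Definition S2RAUT (H : G -> Prop) (T : triple) : Prop :=
  let: (U, V, W) := T in
  SYM U /\ SSYM H V /\ SYM W /\
  forall x s, H s -> U x * V s = W (x * s).

Definition S2LAUT (H : G -> Prop) (T : triple) : Prop :=
  let: (U, V, W) := T in
  SSYM H U /\ SYM V /\ SYM W /\
  forall s y, H s -> U s * V y = W (s * y).

Definition S2R_companion (H : G -> Prop) (A : G -> G) (c : G) : Prop :=
  SSYM H A /\ H c /\ S2RAUT H (A, compr A (Rm c), compr A (Rm c)).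
Definition S2L_companion (H : G -> Prop) (A : G -> G) (c : G) : Prop :=
  SSYM H A /\ H c /\ S2LAUT H (A, compr A (Rm c), compr A (Rm c)).

Definition S2RPAUT (H : G -> Prop) (A : G -> G) : Prop :=
  exists c, S2R_companion H A c.
Definition S2LPAUT (H : G -> Prop) (A : G -> G) : Prop :=
  exists c, S2L_companion H A c.

End Defs.

(* Putting x = e or s = e in the two autotopism equations gives
   xW = xU·s2 and yW = s1·yV.  With xU = xA·s1, the identity
   (xs·z)s = x(sz·s) turns xW·s1 into xA·c and (xU·yV)s1 into xA·(yW·s1);
   hence A R_c = W R_{s1}, and multiplying both autotopism equations on the
   right by s1 shows that (A, AR_c, AR_c) is again a left and a right
   autotopism. *)

From mathcomp Require Import ssreflect ssrfun ssrbool.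
From Stdlib Require Import ClassicalEpsilon FunctionalExtensionality.

Set Implicit Arguments.
Unset Strict Implicit.

Section Inverses.
Variables (G : Type) (L : loop G).

Lemma finvK f : bijective f -> forall y, f (finv L f y) = y.
Proof.
move=> [g _ gK] y; apply: (epsilon_spec (inhabits (e L)) (fun x => f x = y)).
by exists (g y).
Qed.

Lemma finv_eq f x y : bijective f -> f x = y -> finv L f y = x.
Proof. by move=> bf fx; apply: (bij_inj bf); rewrite finvK // fx. Qed.

Lemma finv_bij f : bijective f -> bijective (finv L f).
Proof. by move=> bf; exists f => x; [rewrite finvK | exact: finv_eq]. Qed.

Lemma finv_finv f : bijective f -> finv L (finv L f) = f.
Proof.
move=> bf; apply: functional_extensionality => y.
by apply: finv_eq; [exact: finv_bij | exact: finv_eq].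
Qed.

Lemma Rm_bij s : bijective (Rm L s).
Proof. by exists (rdiv L ^~ s) => x; rewrite /Rm ?mulKr ?mulVr. Qed.

Lemma Lm_bij s : bijective (Lm L s).
Proof. by exists (ldiv L s) => x; rewrite /Lm ?mulKl ?mulVl. Qed.

Lemma finv_Rm s y : finv L (Rm L s) y = rdiv L y s.
Proof. by apply: finv_eq; [exact: Rm_bij | rewrite /Rm mulVr]. Qed.

End Inverses.

Section SemiSymmetries.
Variables (G : Type) (L : loop G) (H : G -> Prop).
Hypothesis subH : subloop L H.
Local Notation "x * y" := (mul L x y).

Lemma SSYM_compr A B : SSYM H A -> SSYM H B -> SSYM H (compr A B).
Proof.
move=> [Abij AH] [Bbij BH]; split; first exact: bij_comp.
move=> y; split.
- case/BH=> z [/AH [x [Hx <-]] <-]; by exists x.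
- case=> x [Hx <-]; apply/BH; exists (A x); split=> //.
  by apply/AH; exists x.
Qed.

Lemma SSYM_Rm s : H s -> SSYM H (Rm L s).
Proof.
case: subH => [_ [Hmul [_ Hrdiv]]] Hs; split; first exact: Rm_bij.
move=> y; split=> [Hy | [x [Hx <-]]]; last exact: Hmul.
by exists (rdiv L y s); split; [exact: Hrdiv | rewrite /Rm mulVr].
Qed.

Lemma SSYM_finv_Rm s : H s -> SSYM H (finv L (Rm L s)).
Proof.
case: subH => [_ [Hmul [_ Hrdiv]]] Hs; split; first exact/finv_bij/Rm_bij.
move=> y; split=> [Hy | [x [Hx <-]]]; last by rewrite finv_Rm; exact: Hrdiv.
by exists (y * s); split; [exact: Hmul | rewrite finv_Rm mulKr].
Qed.

End SemiSymmetries.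

Section Autotopisms.
Variables (G : Type) (L : loop G) (H : G -> Prop).
Hypothesis subH : subloop L H.
Hypothesis Hid : forall x z s, H s ->
  mul L (mul L (mul L x s) z) s = mul L x (mul L (mul L s z) s).
Variables U V W : G -> G.
Hypotheses (HL : S2LAUT L H (U, V, W)) (HR : S2RAUT L H (U, V, W)).
Local Notation "x * y" := (mul L x y).

Let s1 := U (e L).
Let s2 := V (e L).
Let A := compr U (finv L (Rm L s1)).
Let c := s1 * s2 * s1.

Lemma mem_e : H (e L).
Proof. by case: subH. Qed.

Lemma mem_s1 : H s1.
Proof.
by case: HL => [[_ UH] _]; apply/UH; exists (e L); split; [exact: mem_e|].
Qed.

Lemma mem_s2 : H s2.
Proof.
by case: HR => [_ [[_ VH] _]]; apply/VH; exists (e L); split; [exact: mem_e|].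
Qed.

Lemma mem_c : H c.
Proof.
case: subH => [_ [Hmul _]].
have Hs1 := mem_s1; have Hs2 := mem_s2.
by apply: (Hmul); first apply: (Hmul).
Qed.

Lemma W_eq_mulr_s2 x : W x = U x * s2.
Proof.
by case: HR => [_ [_ [_ HReq]]]; have := HReq x (e L) mem_e; rewrite mulg1.
Qed.

Lemma W_eq_s1_mull y : W y = s1 * V y.
Proof.
by case: HL => [_ [_ [_ HLeq]]]; have := HLeq (e L) y mem_e; rewrite mul1g.
Qed.

Lemma U_eq_mulr_s1 x : U x = A x * s1.
Proof. by rewrite /A /compr finv_Rm mulVr. Qed.

Lemma W_mulr_s1 x : W x * s1 = A x * c.
Proof. by rewrite W_eq_mulr_s2 U_eq_mulr_s1 /c Hid //; exact: mem_s1. Qed.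

Lemma UV_mulr_s1 x y : U x * V y * s1 = A x * (W y * s1).
Proof. by rewrite U_eq_mulr_s1 Hid -?W_eq_s1_mull //; exact: mem_s1. Qed.

Lemma A_SSYM : SSYM H A.
Proof.
by case: HL => [UH _]; apply: SSYM_compr => //; exact/SSYM_finv_Rm/mem_s1.
Qed.

Lemma ARc_SSYM : SSYM H (compr A (Rm L c)).
Proof. by apply: SSYM_compr; [exact: A_SSYM | exact/SSYM_Rm/mem_c]. Qed.

Lemma S2L_companion_c : S2L_companion L H A c.
Proof.
case: HL => [_ [_ [_ HLeq]]].
split; [exact: A_SSYM | split; first exact: mem_c].
have [ARbij _] := ARc_SSYM.
by split; [exact: A_SSYM | do 2 split=> //] => s y Hs;
  rewrite /compr /Rm -!W_mulr_s1 -HLeq // UV_mulr_s1.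
Qed.

Lemma S2R_companion_c : S2R_companion L H A c.
Proof.
case: HR => [_ [_ [_ HReq]]].
split; [exact: A_SSYM | split; first exact: mem_c].
have [ARbij _] := ARc_SSYM.
by split; [exact: A_SSYM.1 | split; [exact: ARc_SSYM | split]] => // x s Hs;
  rewrite /compr /Rm -!W_mulr_s1 -HReq // UV_mulr_s1.
Qed.

Lemma autotopism_decomposition :
  (U, V, W) =
    tmul (A, compr A (Rm L c), compr A (Rm L c))
         (tinv L (finv L (Rm L s1), compr (Lm L s1) (Rm L s1), Rm L s1)).
Proof.
rewrite /tmul /tinv /=; congr (_, _, _);
  apply: functional_extensionality => x; rewrite /compr.
- by rewrite finv_finv /Rm -?U_eq_mulr_s1 //; exact: Rm_bij.
- apply: esym; apply: finv_eq; first exact: bij_comp (Rm_bij _ _) (Lm_bij _ _).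
  by rewrite /compr /Lm /Rm -W_eq_s1_mull W_mulr_s1.
- by rewrite finv_Rm /Rm -W_mulr_s1 mulKr.
Qed.

End Autotopisms.

Theorem theorem3p8 (G : Type) (L : loop G) (H : G -> Prop)
  (HsubL : subloop L H) (Hnt : nontrivial L H)
  (Hid : forall x z s, H s ->
     mul L (mul L (mul L x s) z) s = mul L x (mul L (mul L s z) s))
  (U V W : G -> G)
  (HL : S2LAUT L H (U, V, W)) (HR : S2RAUT L H (U, V, W)) :
  let s1 := U (e L) in
  let s2 := V (e L) in
  let A := compr U (finv L (Rm L s1)) in
  let c := mul L (mul L s1 s2) s1 in
  [/\ S2LPAUT L H A, S2RPAUT L H A,
      S2L_companion L H A c, S2R_companion L H A c &
      (U, V, W) =
        tmul (A, compr A (Rm L c), compr A (Rm L c))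
             (tinv L (finv L (Rm L s1), compr (Lm L s1) (Rm L s1), Rm L s1))].
Proof.
move=> s1 s2 A c.
have Lc := S2L_companion_c HsubL Hid HL HR.
have Rc := S2R_companion_c HsubL Hid HL HR.
split; [by exists c | by exists c | done | done |].
exact: (autotopism_decomposition HsubL Hid HL HR).
Qed.
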